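(* There is a universal constant $C>0$ such that the following holds. Let $U=(u^1,\dots,u^m)$ be a viscosity solution of the vectorial one-phase problem in $B_1\subset\mathbb R^n$ and let $\varepsilon>0$ be such that $$|U-f^1x_n^+|\le\varepsilon\quad\text{in } B_1,\qquad |U|\equiv0\quad\text{in } B_1\cap\{x_n<-\varepsilon\},$$ where $f^1=(1,0,\dots,0)\in\mathbb R^m$. Then (i) for $i=2,\dots,m$, $|u^i|\le C\varepsilon(x_n+\varepsilon)^+$ in $B_{3/4}$; (ii) $x_n-\varepsilon\le u^1\le|U|\le(x_n+2\varepsilon)^+$ in $B_1$.
   Context: $t^+=\max\{t,0\}$; $x_n$ is the last coordinate of $x\in\mathbb R^n$. Definition (viscosity solution): $U\in C(\Omega,\mathbb R^m)$ is a viscosity solution of $\Delta U=0$ in $\Omega(U):=\Omega\cap\{|U|>0\}$, $|\nabla|U||=1$ on $F(U):=\Omega\cap\partial\Omega(U)$, if each component $u^i$ is harmonic in $\Omega(U)$ and, for every $x_0\in F(U)$ and every $\varphi\in C^2$ near $x_0$ with $|\nabla\varphi(x_0)|\ne0$: (i) if $|\nabla\varphi(x_0)|>1$, then for every unit vector $f\in\mathbb R^m$, $\langle U,f\rangle$ cannot be touched by below by $\varphi$ at $x_0$ (i.e. there is no such $\varphi$ with $\varphi(x_0)=\langle U,f\rangle(x_0)$ and $\varphi\le\langle U,f\rangle$ near $x_0$); (ii) if $|\nabla\varphi(x_0)|<1$, then $|U|$ cannot be touched by above by $\varphi$ at $x_0$. Universal constants depend only on $n$ and $m$. *)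

From Stdlib Require Import Reals Lra.
Open Scope R_scope.

(* Points of R^n are represented as functions nat -> R; a point lies in R^n
   when all coordinates of index >= n vanish.  Coordinates are 0-based:
   x_1,...,x_n of the paper are x 0, ..., x (n-1). *)
Definition pt := nat -> R.
Definition inRn (n : nat) (x : pt) : Prop := forall i, (n <= i)%nat -> x i = 0.

Fixpoint rsum (k : nat) (g : nat -> R) : R :=
  match k with O => 0 | S k' => rsum k' g + g k' end.

Definition norm (k : nat) (v : pt) : R := sqrt (rsum k (fun i => v i ^ 2)).
Definition dot (k : nat) (v w : pt) : R := rsum k (fun i => v i * w i).
Definition dist (n : nat) (x y : pt) : R := norm n (fun i => x i - y i).

Definition ball (n : nat) (c : pt) (r : R) (x : pt) : Prop :=
  inRn n x /\ dist n x c < r.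
Definition origin : pt := fun _ => 0.
Definition Bn (n : nat) (r : R) : pt -> Prop := ball n origin r.

Definition interior (n : nat) (S : pt -> Prop) (x : pt) : Prop :=
  inRn n x /\ exists r, r > 0 /\ forall y, ball n x r y -> S y.
Definition closure (n : nat) (S : pt -> Prop) (x : pt) : Prop :=
  inRn n x /\ forall r, r > 0 -> exists y, ball n x r y /\ S y.
Definition boundary (n : nat) (S : pt -> Prop) (x : pt) : Prop :=
  closure n S x /\ ~ interior n S x.

Definition shift (x : pt) (i : nat) (t : R) : pt :=
  fun j => if Nat.eqb j i then x j + t else x j.
Definition has_partial (f : pt -> R) (x : pt) (i : nat) (l : R) : Prop :=
  derivable_pt_lim (fun t => f (shift x i t)) 0 l.

Definition cont_on (n : nat) (S : pt -> Prop) (f : pt -> R) : Prop :=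
  forall x, S x -> forall e, e > 0 -> exists d, d > 0 /\
    forall y, S y -> dist n y x < d -> Rabs (f y - f x) < e.

Definition C2_with (n : nat) (O : pt -> Prop) (f : pt -> R)
    (D1 : nat -> pt -> R) (D2 : nat -> nat -> pt -> R) : Prop :=
  cont_on n O f /\
  (forall i, (i < n)%nat -> cont_on n O (D1 i)) /\
  (forall i j, (i < n)%nat -> (j < n)%nat -> cont_on n O (D2 i j)) /\
  (forall x, O x -> forall i, (i < n)%nat -> has_partial f x i (D1 i x)) /\
  (forall x, O x -> forall i j, (i < n)%nat -> (j < n)%nat ->
      has_partial (D1 i) x j (D2 i j x)).

Definition harmonic_on (n : nat) (O : pt -> Prop) (f : pt -> R) : Prop :=
  exists D1 D2, C2_with n O f D1 D2 /\
    forall x, O x -> rsum n (fun i => D2 i i x) = 0.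

(* U : R^n -> R^m, components U x j for j < m *)
Definition Uabs (m : nat) (U : pt -> pt) (x : pt) : R := norm m (U x).
Definition pos_set (n m : nat) (U : pt -> pt) (x : pt) : Prop :=
  Bn n 1 x /\ Uabs m U x > 0.
Definition free_bdry (n m : nat) (U : pt -> pt) (x : pt) : Prop :=
  Bn n 1 x /\ boundary n (pos_set n m U) x.

Definition C2_near (n : nat) (phi : pt -> R) (x0 : pt) (D1 : nat -> pt -> R) : Prop :=
  exists r, r > 0 /\ exists D2, C2_with n (ball n x0 r) phi D1 D2.
Definition grad_norm (n : nat) (D1 : nat -> pt -> R) (x : pt) : R :=
  norm n (fun i => D1 i x).

Definition touches_below (n : nat) (phi g : pt -> R) (x0 : pt) : Prop :=
  phi x0 = g x0 /\ exists r, r > 0 /\ forall y, ball n x0 r y -> phi y <= g y.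
Definition touches_above (n : nat) (phi g : pt -> R) (x0 : pt) : Prop :=
  phi x0 = g x0 /\ exists r, r > 0 /\ forall y, ball n x0 r y -> g y <= phi y.

Definition viscosity_solution (n m : nat) (U : pt -> pt) : Prop :=
  (forall j, (j < m)%nat -> cont_on n (Bn n 1) (fun x => U x j)) /\
  (forall j, (j < m)%nat -> harmonic_on n (pos_set n m U) (fun x => U x j)) /\
  (forall x0, free_bdry n m U x0 ->
     forall (phi : pt -> R) (D1 : nat -> pt -> R), C2_near n phi x0 D1 ->
       (grad_norm n D1 x0 > 1 ->
          forall f : pt, norm m f = 1 ->
            ~ touches_below n phi (fun x => dot m (U x) f) x0) /\
       (grad_norm n D1 x0 < 1 -> ~ touches_above n phi (Uabs m U) x0)).

Definition e1 : pt := fun j => if Nat.eqb j 0 then 1 else 0.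

(* Part (ii) is algebra on the flatness hypothesis |U - x_n^+ f^1| <= eps.  For (i), a
   component u = u^i, i >= 2, satisfies |u| <= eps, vanishes below {x_n = -eps} and is
   harmonic where it does not vanish.  Over a point y with 0 <= y_n + eps < h, h ~ 1/n,
   take the box |x' - y'| <= h, -eps <= x_n <= h - eps and the barrier
   w = D |x' - y'|^2 + A t - B t^2, t = x_n + eps, which is strictly superharmonic,
   nonnegative on the box and >= 1 on its top and lateral faces.  A positive maximum of
   +-u/eps - w over the box can lie neither on these faces, nor on the floor (where u = 0
   by continuity), nor inside (where its Laplacian would be positive); hence
   |u(y)| <= eps w(y) <= A eps (y_n + eps).  When y_n + eps >= h, |u| <= eps suffices. *)

From Stdlib Require Import Reals Lra Lia Classical FunctionalExtensionality.
From Coquelicot Require Import Coquelicot.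
From mathcomp Require all_boot all_order all_algebra all_classical all_reals all_analysis Rstruct Rstruct_topology.
Set Bullet Behavior "Strict Subproofs".
Open Scope R_scope.

Lemma rsum_ext k f g : (forall i, (i < k)%nat -> f i = g i) -> rsum k f = rsum k g.
Proof.
  induction k as [|k IH]; intros Hfg; simpl; [reflexivity|].
  rewrite IH, Hfg; auto with arith.
Qed.

Lemma rsum_le k f g : (forall i, (i < k)%nat -> f i <= g i) -> rsum k f <= rsum k g.
Proof.
  induction k as [|k IH]; intros Hfg; simpl; [lra|].
  apply Rplus_le_compat; auto with arith.
Qed.

Lemma rsum_const k c : rsum k (fun _ => c) = INR k * c.
Proof. induction k as [|k IH]; simpl rsum; [simpl; ring|]. rewrite IH, S_INR. ring. Qed.

Lemma rsum_nonneg k f : (forall i, (i < k)%nat -> 0 <= f i) -> 0 <= rsum k f.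
Proof.
  intros Hf. replace 0 with (rsum k (fun _ => 0)) by (rewrite rsum_const; ring).
  now apply rsum_le.
Qed.

Lemma rsum_plus k f g : rsum k (fun i => f i + g i) = rsum k f + rsum k g.
Proof. induction k as [|k IH]; simpl; [ring|]. rewrite IH. ring. Qed.

Lemma rsum_minus k f g : rsum k (fun i => f i - g i) = rsum k f - rsum k g.
Proof. induction k as [|k IH]; simpl; [ring|]. rewrite IH. ring. Qed.

Lemma rsum_scal k c f : rsum k (fun i => c * f i) = c * rsum k f.
Proof. induction k as [|k IH]; simpl; [ring|]. rewrite IH. ring. Qed.

Lemma rsum_term_le k f j :
  (forall i, (i < k)%nat -> 0 <= f i) -> (j < k)%nat -> f j <= rsum k f.
Proof.
  induction k as [|k IH]; intros Hf Hj; simpl; [lia|].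
  assert (0 <= rsum k f) by (apply rsum_nonneg; auto with arith).
  destruct (Nat.eq_dec j k) as [->|Hjk].
  - lra.
  - assert (f j <= rsum k f) by (apply IH; auto with arith; lia).
    assert (0 <= f k) by auto with arith. lra.
Qed.

Lemma rsum_update k f g j : (j < k)%nat -> (forall i, (i < k)%nat -> i <> j -> g i = f i) ->
  rsum k g = rsum k f - f j + g j.
Proof.
  induction k as [|k IH]; intros Hj Hfg; simpl; [lia|].
  destruct (Nat.eq_dec j k) as [->|Hjk].
  - rewrite (rsum_ext k g f) by (intros; apply Hfg; lia). ring.
  - rewrite IH, (Hfg k) by (auto with arith; lia). ring.
Qed.

Lemma rsum_pos_term k f : 0 < rsum k f -> exists i, (i < k)%nat /\ 0 < f i.
Proof.
  induction k as [|k IH]; simpl; intros Hpos; [lra|].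
  destruct (Rlt_dec 0 (f k)) as [Hk|Hk].
  - exists k; auto with arith.
  - destruct IH as [i [Hi Hfi]]; [lra|]. exists i; auto with arith.
Qed.

Lemma sum_sq_nonneg m (v : pt) : 0 <= rsum m (fun i => v i ^ 2).
Proof. apply rsum_nonneg; intros; apply pow2_ge_0. Qed.

Lemma norm_nonneg m v : 0 <= norm m v.
Proof. apply sqrt_pos. Qed.

Lemma norm_sq m v : norm m v ^ 2 = rsum m (fun i => v i ^ 2).
Proof. apply pow2_sqrt, sum_sq_nonneg. Qed.

Lemma norm_le_of_sq m v r : 0 <= r -> rsum m (fun i => v i ^ 2) <= r ^ 2 -> norm m v <= r.
Proof. intros Hr Hs. rewrite <- (sqrt_pow2 r Hr). now apply sqrt_le_1_alt. Qed.

Lemma Rabs_le_norm m v j : (j < m)%nat -> Rabs (v j) <= norm m v.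
Proof.
  intros Hj. rewrite <- (sqrt_pow2 _ (Rabs_pos (v j))), pow2_abs.
  apply sqrt_le_1_alt, (rsum_term_le m (fun i => v i ^ 2)); auto.
  intros; apply pow2_ge_0.
Qed.

Lemma dist_origin n x : dist n x origin = norm n x.
Proof. unfold dist, norm, origin. f_equal. apply rsum_ext. intros. ring. Qed.

Lemma INR_le_sq n : INR n <= INR n ^ 2.
Proof.
  destruct n as [|n]; [simpl; lra|].
  assert (1 <= INR (S n)) by (apply (le_INR 1); lia). nra.
Qed.

Lemma norm_le_of_coord_close n d y z : 0 <= d ->
  (forall j, (j < n)%nat -> Rabs (z j - y j) <= d) -> norm n z <= norm n y + INR n * d.
Proof.
  intros Hd Hzy. pose proof (norm_nonneg n y). pose proof (INR_le_sq n). set (N := norm n y) in *.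
  assert (HN : 0 <= INR n) by apply pos_INR.
  apply norm_le_of_sq; [nra|].
  apply Rle_trans with (rsum n (fun i => y i ^ 2 + (2 * N * d + d ^ 2))).
  - apply rsum_le. intros j Hj.
    assert (Hyj : Rabs (y j) <= N) by now apply Rabs_le_norm.
    assert (Hzj : Rabs (z j) <= Rabs (y j) + d).
    { replace (z j) with (y j + (z j - y j)) by ring.
      eapply Rle_trans; [apply Rabs_triang|specialize (Hzy j Hj); lra]. }
    rewrite <- (pow2_abs (z j)), <- (pow2_abs (y j)).
    pose proof (Rabs_pos (z j)). pose proof (Rabs_pos (y j)). nra.
  - rewrite rsum_plus, rsum_const, <- norm_sq. fold N. nra.
Qed.

Lemma dist_le_coord n x y d : 0 <= d ->
  (forall j, (j < n)%nat -> Rabs (y j - x j) <= d) -> dist n y x <= INR n * d.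
Proof.
  intros Hd Hyx. unfold dist.
  replace (INR n * d) with (norm n origin + INR n * d).
  - apply norm_le_of_coord_close; [exact Hd|]. intros j Hj.
    unfold origin. rewrite Rminus_0_r. exact (Hyx j Hj).
  - unfold norm, origin. rewrite (rsum_ext n _ (fun _ => 0)) by (intros; ring).
    rewrite rsum_const, Rmult_0_r, sqrt_0. ring.
Qed.

Lemma e1_0 : e1 0%nat = 1.
Proof. reflexivity. Qed.

Lemma e1_neq0 j : j <> 0%nat -> e1 j = 0.
Proof. destruct j; [lia|reflexivity]. Qed.

Lemma norm_le_sub_e1 m W a : (1 <= m)%nat -> 0 <= a ->
  norm m W <= a + norm m (fun j => W j - e1 j * a).
Proof.
  intros Hm Ha. set (V := fun j => W j - e1 j * a).
  assert (HV0 : V 0%nat <= norm m V)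
    by (eapply Rle_trans; [apply Rle_abs|apply Rabs_le_norm; lia]).
  pose proof (norm_nonneg m V).
  apply norm_le_of_sq; [nra|].
  rewrite (rsum_update m (fun j => V j ^ 2) _ 0) by
    (try lia; intros j _ Hj; unfold V; rewrite e1_neq0 by exact Hj; ring).
  assert (HW0 : W 0%nat = V 0%nat + a) by (unfold V; rewrite e1_0; ring).
  rewrite <- norm_sq, HW0. nra.
Qed.

Lemma shift_same x j t : shift x j t j = x j + t.
Proof. unfold shift. now rewrite Nat.eqb_refl. Qed.

Lemma shift_other x j t i : i <> j -> shift x j t i = x i.
Proof. intros Hij. unfold shift. now destruct (Nat.eqb_spec i j). Qed.

Lemma shift_shift x j t s : shift (shift x j t) j s = shift x j (t + s).
Proof.
  apply functional_extensionality. intros i. unfold shift.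
  destruct (Nat.eqb i j); ring.
Qed.

Lemma shift_inRn n x j t : (j < n)%nat -> inRn n x -> inRn n (shift x j t).
Proof. intros Hj Hx i Hi. rewrite shift_other by lia. auto. Qed.

Lemma dist_shift n x j t : (j < n)%nat -> dist n (shift x j t) x = Rabs t.
Proof.
  intros Hj. unfold dist, norm.
  rewrite (rsum_update n (fun _ => 0) _ j Hj).
  - rewrite rsum_const, shift_same, <- (sqrt_pow2 _ (Rabs_pos t)), pow2_abs.
    f_equal. ring.
  - intros i _ Hij. rewrite shift_other by exact Hij. ring.
Qed.

Lemma cont_on_subset n S T f : (forall x, T x -> S x) -> cont_on n S f -> cont_on n T f.
Proof.
  intros HTS Hf x Hx e He. destruct (Hf x (HTS x Hx) e He) as [d [Hd Hfd]].
  exists d. split; auto.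
Qed.

Lemma cont_on_const n S c : cont_on n S (fun _ => c).
Proof.
  intros x _ e He. exists 1. split; [lra|]. intros. rewrite Rminus_eq_0, Rabs_R0. lra.
Qed.

Lemma cont_on_plus n S f g : cont_on n S f -> cont_on n S g -> cont_on n S (fun x => f x + g x).
Proof.
  intros Hf Hg x Hx e He.
  destruct (Hf x Hx (e / 2)) as [d1 [Hd1 Hf1]]; [lra|].
  destruct (Hg x Hx (e / 2)) as [d2 [Hd2 Hg2]]; [lra|].
  exists (Rmin d1 d2). split; [now apply Rmin_glb_lt|].
  intros y Hy Hyx. pose proof (Rmin_l d1 d2). pose proof (Rmin_r d1 d2).
  replace (f y + g y - (f x + g x)) with ((f y - f x) + (g y - g x)) by ring.
  eapply Rle_lt_trans; [apply Rabs_triang|].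
  pose proof (Hf1 y Hy ltac:(lra)). pose proof (Hg2 y Hy ltac:(lra)). lra.
Qed.

Lemma cont_on_scal n S c f : cont_on n S f -> cont_on n S (fun x => c * f x).
Proof.
  intros Hf x Hx e He.
  assert (Hc : 0 < Rabs c + 1) by (pose proof (Rabs_pos c); lra).
  destruct (Hf x Hx (e / (Rabs c + 1))) as [d [Hd Hfd]]; [now apply Rdiv_lt_0_compat|].
  exists d. split; auto. intros y Hy Hyx.
  rewrite <- Rmult_minus_distr_l, Rabs_mult.
  specialize (Hfd y Hy Hyx). pose proof (Rabs_pos c). pose proof (Rabs_pos (f y - f x)).
  apply Rle_lt_trans with ((Rabs c + 1) * Rabs (f y - f x)); [nra|].
  apply (Rmult_lt_compat_l (Rabs c + 1)) in Hfd; auto.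
  now replace ((Rabs c + 1) * (e / (Rabs c + 1))) with e in Hfd by (field; lra).
Qed.

Lemma cont_on_minus n S f g : cont_on n S f -> cont_on n S g -> cont_on n S (fun x => f x - g x).
Proof.
  intros Hf Hg. replace (fun x => f x - g x) with (fun x => f x + -1 * g x)
    by (apply functional_extensionality; intros; ring).
  apply cont_on_plus; [exact Hf|now apply cont_on_scal].
Qed.

Lemma cont_on_coord_fun n S (g : R -> R) j : (j < n)%nat -> (forall t, continuity_pt g t) ->
  cont_on n S (fun x => g (x j)).
Proof.
  intros Hj Hg x _ e He.
  destruct (Hg (x j) e He) as [d [Hd Hgd]].
  exists d. split; auto. intros y _ Hyx.
  destruct (Req_dec (y j) (x j)) as [Heq|Hne].
  - rewrite Heq, Rminus_eq_0, Rabs_R0. lra.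
  - apply (Hgd (y j)). split; [split; [exact I|congruence]|].
    eapply Rle_lt_trans; [|exact Hyx]. now apply (Rabs_le_norm n (fun i => y i - x i)).
Qed.

Lemma cont_on_separable n S (g : nat -> R -> R) :
  (forall j, (j < n)%nat -> forall t, continuity_pt (g j) t) ->
  cont_on n S (fun x => rsum n (fun i => g i (x i))).
Proof.
  intros Hg. assert (Hm : forall m, (m <= n)%nat -> cont_on n S (fun x => rsum m (fun i => g i (x i)))).
  { induction m as [|m IH]; intros Hmn; simpl.
    - apply cont_on_const.
    - apply cont_on_plus; [apply IH; lia|].
      apply cont_on_coord_fun; [lia|]. apply Hg. lia. }
  auto.
Qed.

Lemma cont_on_nonzero_near n S f x : cont_on n S f -> S x -> f x <> 0 ->
  exists d, d > 0 /\ forall z, S z -> dist n z x < d -> f z <> 0.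
Proof.
  intros Hf Hx Hfx. destruct (Hf x Hx (Rabs (f x))) as [d [Hd Hfd]].
  { now apply Rabs_pos_lt. }
  exists d. split; auto. intros z Hz Hzx Hfz.
  specialize (Hfd z Hz Hzx). rewrite Hfz, Rminus_0_l, Rabs_Ropp in Hfd. lra.
Qed.

Lemma derivable_pt_lim_translate G t l :
  derivable_pt_lim G t l <-> derivable_pt_lim (fun s => G (t + s)) 0 l.
Proof.
  split; intros HG e He; destruct (HG e He) as [d Hd]; exists d; intros h Hh Hhd;
    specialize (Hd h Hh Hhd); rewrite ?Rplus_0_l, ?Rplus_0_r in *; exact Hd.
Qed.

Lemma has_partial_line F x j t l :
  has_partial F (shift x j t) j l -> derivable_pt_lim (fun s => F (shift x j s)) t l.
Proof.
  unfold has_partial. intros HF. apply derivable_pt_lim_translate.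
  replace (fun s => F (shift x j (t + s))) with (fun s => F (shift (shift x j t) j s)); auto.
  apply functional_extensionality. intros s. now rewrite shift_shift.
Qed.

Lemma has_partial_separable n (g : nat -> R -> R) x j l : (j < n)%nat ->
  derivable_pt_lim (g j) (x j) l -> has_partial (fun z => rsum n (fun i => g i (z i))) x j l.
Proof.
  intros Hj Hg. unfold has_partial.
  replace (fun s => rsum n (fun i => g i (shift x j s i)))
    with (fun s => (rsum n (fun i => g i (x i)) - g j (x j)) + g j (x j + s)).
  - replace l with (0 + l) by ring.
    apply derivable_pt_lim_plus; [apply derivable_pt_lim_const|].
    now apply (derivable_pt_lim_translate (g j)).
  - apply functional_extensionality. intros s.
    rewrite (rsum_update n (fun i => g i (x i)) (fun i => g i (shift x j s i)) j Hj).
    + cbv beta. rewrite shift_same. ring.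
    + intros i _ Hij. now rewrite shift_other.
Qed.

Lemma has_partial_coord_fun (g : R -> R) x j l :
  derivable_pt_lim g (x j) l -> has_partial (fun z => g (z j)) x j l.
Proof.
  intros Hg. unfold has_partial.
  replace (fun s => g (shift x j s j)) with (fun s => g (x j + s)).
  - now apply (derivable_pt_lim_translate g).
  - apply functional_extensionality. intros s. now rewrite shift_same.
Qed.

Lemma has_partial_scal F x j c l :
  has_partial F x j l -> has_partial (fun z => c * F z) x j (c * l).
Proof. intros HF. exact (derivable_pt_lim_scal _ c 0 l HF). Qed.

Lemma has_partial_minus F G x j l1 l2 : has_partial F x j l1 -> has_partial G x j l2 ->
  has_partial (fun z => F z - G z) x j (l1 - l2).
Proof. intros HF HG. exact (derivable_pt_lim_minus _ _ 0 l1 l2 HF HG). Qed.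

Lemma harmonic_on_scal n O f c : harmonic_on n O f -> harmonic_on n O (fun x => c * f x).
Proof.
  intros [D1 [D2 [[Hf [HD1 [HD2 [Hf1 Hf2]]]] Hlap]]].
  exists (fun i x => c * D1 i x), (fun i j x => c * D2 i j x).
  split; [split; [|split; [|split; [|split]]]|].
  - now apply cont_on_scal.
  - intros i Hi. now apply cont_on_scal, HD1.
  - intros i j Hi Hj. now apply cont_on_scal, HD2.
  - intros x Hx i Hi. now apply has_partial_scal, Hf1.
  - intros x Hx i j Hi Hj. now apply has_partial_scal, Hf2.
  - intros x Hx. now rewrite (rsum_scal n c (fun i => D2 i i x)), Hlap, Rmult_0_r.
Qed.

Lemma local_max_deriv2_nonpos (g h : R -> R) d L : 0 < d ->
  (forall t, Rabs t < d -> derivable_pt_lim g t (h t)) ->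
  (forall t, Rabs t < d -> g t <= g 0) ->
  derivable_pt_lim h 0 L -> L <= 0.
Proof.
  intros Hd Hg Hmax Hh. apply Rnot_lt_le. intros HL.
  destruct (Hh (L / 2)) as [[d' Hd'] Hh']; [lra|].
  assert (Hsign : forall c, c <> 0 -> Rabs c < d' -> 0 < (h c - h 0) * c).
  { intros c Hc Hcd. specialize (Hh' c Hc Hcd). rewrite Rplus_0_l in Hh'.
    apply Rabs_def2 in Hh'.
    replace ((h c - h 0) * c) with ((h c - h 0) / c * c ^ 2) by (field; exact Hc).
    apply Rmult_lt_0_compat; [lra|]. now apply pow2_gt_0. }
  set (t := Rmin d d' / 2).
  assert (Ht : 0 < t < Rmin d d') by (unfold t; pose proof (Rmin_glb_lt d d' 0 Hd Hd'); lra).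
  pose proof (Rmin_l d d'). pose proof (Rmin_r d d').
  (* [h] increases through [0]: by the mean value theorem, [g] increases on the side
     where [h] keeps the sign of [h 0]. *)
  destruct (Rle_or_lt 0 (h 0)) as [Hh0|Hh0].
  - destruct (MVT_cor2 g h 0 t) as [c [Hgc Hc]]; [lra| |].
    { intros c Hc. apply Hg. rewrite Rabs_right; lra. }
    pose proof (Hsign c ltac:(lra) ltac:(rewrite Rabs_right; lra)).
    assert (h 0 < h c) by nra.
    pose proof (Hmax t ltac:(rewrite Rabs_right; lra)). nra.
  - destruct (MVT_cor2 g h (- t) 0) as [c [Hgc Hc]]; [lra| |].
    { intros c Hc. apply Hg. rewrite Rabs_left1; lra. }
    pose proof (Hsign c ltac:(lra) ltac:(rewrite Rabs_left; lra)).
    assert (h c < h 0) by nra.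
    pose proof (Hmax (- t) ltac:(rewrite Rabs_left; lra)). nra.
Qed.

Lemma laplacian_nonpos_at_line_max n F (D1 : nat -> pt -> R) (D2 : nat -> R) X :
  (forall j, (j < n)%nat -> exists r, r > 0 /\ forall s, Rabs s < r ->
     F (shift X j s) <= F X /\ has_partial F (shift X j s) j (D1 j (shift X j s))) ->
  (forall j, (j < n)%nat -> has_partial (D1 j) X j (D2 j)) ->
  rsum n D2 <= 0.
Proof.
  intros Hline HD2. apply Rnot_lt_le. intros Hpos.
  destruct (rsum_pos_term n D2 Hpos) as [j [Hj HD2j]].
  destruct (Hline j Hj) as [r [Hr Hjr]].
  assert (HX0 : shift X j 0 = X)
    by (apply functional_extensionality; intros i; unfold shift; destruct (Nat.eqb i j); ring).
  enough (D2 j <= 0) by lra.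
  apply (local_max_deriv2_nonpos (fun s => F (shift X j s)) (fun s => D1 j (shift X j s)) r).
  - exact Hr.
  - intros t Ht. apply has_partial_line, Hjr, Ht.
  - intros t Ht. rewrite HX0. apply Hjr, Ht.
  - exact (HD2 j Hj).
Qed.

Definition box (n : nat) (lo hi : nat -> R) (x : pt) : Prop :=
  inRn n x /\ forall j, (j < n)%nat -> lo j <= x j <= hi j.

Lemma div_INR_succ_pos n d : 0 < d -> 0 < d / (INR n + 1).
Proof. intros Hd. apply Rdiv_lt_0_compat; [exact Hd|pose proof (pos_INR n); lra]. Qed.

Lemma dist_lt_of_coord_close n x y d : 0 < d ->
  (forall j, (j < n)%nat -> Rabs (y j - x j) <= d / (INR n + 1)) -> dist n y x < d.
Proof.
  intros Hd Hyx. pose proof (pos_INR n).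
  eapply Rle_lt_trans; [apply dist_le_coord; [apply Rlt_le, div_INR_succ_pos, Hd|exact Hyx]|].
  apply (Rmult_lt_reg_r (INR n + 1)); [lra|].
  replace (INR n * (d / (INR n + 1)) * (INR n + 1)) with (INR n * d) by (field; lra). nra.
Qed.

Module BoxCompactness.
Import all_boot all_order all_algebra all_classical all_reals all_analysis Rstruct Rstruct_topology.
Import Order.TTheory GRing.Theory Num.Theory.
Local Open Scope ring_scope.
Local Open Scope classical_set_scope.

Lemma box_max (n : nat) (lo hi : nat -> R) (f : pt -> R) :
  (forall j, lt j n -> Rle (lo j) (hi j)) -> cont_on n (box n lo hi) f ->
  exists x, box n lo hi x /\ forall y, box n lo hi y -> Rle (f y) (f x).
Proof.
move=> hlohi hf.
pose toPt (v : 'rV[R]_n) : pt := fun j => oapp (fun i : 'I_n => v ord0 i) 0 (insub j).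
pose A := [set v : 'rV[R]_n | forall i : 'I_n, `[lo i, hi i]%classic (v ord0 i)].
have cA : compact A.
  apply: (@rV_compact _ n (fun i : 'I_n => `[lo i, hi i]%classic)) => i; exact: segment_compact.
have toPtK : forall v, A v -> box n lo hi (toPt v).
  move=> v Av; split.
    by move=> j /ssrnat.leP jn; rewrite /toPt insubF //; apply/negbTE; rewrite -leqNgt.
  move=> j /ssrnat.ltP jn; rewrite /toPt insubT /=.
  have := Av (Ordinal jn); rewrite /= in_itv /= => /andP [h1 h2].
  by split; apply/RleP.
have fromPt : forall y, box n lo hi y -> A (\row_i y (nat_of_ord i)) /\ toPt (\row_i y (nat_of_ord i)) = y.
  move=> y [yn yb]; split.
    move=> i; rewrite /= mxE in_itv /=.
    have [h1 h2] := yb _ (ssrnat.ltP (ltn_ord i)).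
    by apply/andP; split; apply/RleP.
  apply: boolp.funext => j; rewrite /toPt.
  case: insubP => [i _ <- | ]; first by rewrite /= mxE.
  by rewrite -leqNgt => /ssrnat.leP jn /=; rewrite yn.
have A0 : A !=set0.
  exists (\row_i lo (nat_of_ord i)) => i; rewrite /= mxE in_itv /= lexx /=.
  by apply/RleP; apply: hlohi; apply/ssrnat.ltP.
have cF : {within A, continuous (f \o toPt)}.
  apply/subspace_continuousP => x Ax.
  apply/(@cvgrPdist_lt R R^o) => e e0.
  have e0' : Rlt 0 e by apply/RltP.
  have [d [d0 hd]] := hf _ (toPtK _ Ax) e e0'.
  rewrite /prop_near1 /within /=.
  apply/nbhs_ballP; exists (Rdiv d (INR n + 1)); first exact/RltP/div_INR_succ_pos.
  move=> y bxy Ay.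
  rewrite -RabsE Rabs_minus_sym; apply/RltP; apply: hd; first exact: toPtK.
  apply: dist_lt_of_coord_close => // j /ssrnat.ltP jn; rewrite /toPt insubT /=.
  case: bxy => _ /(_ ord0 (Ordinal jn)).
  rewrite /ball /= -RabsE Rabs_minus_sym => h; apply: Rlt_le; exact/RltP.
have [c Ac cmax] := compact_EVT_max A0 cA cF.
exists (toPt c); split; first by apply: toPtK; rewrite inE in Ac.
move=> y yK; have [Ay ey] := fromPt y yK.
rewrite -ey; apply/RleP; apply: cmax; by rewrite inE.
Qed.

End BoxCompactness.

Lemma Bn_shift n r X j : (j < n)%nat -> Bn n r X ->
  exists d, d > 0 /\ forall s, Rabs s < d -> Bn n r (shift X j s).
Proof.
  intros Hj [HX HXr]. rewrite dist_origin in HXr.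
  assert (HN : 0 < INR n) by (apply lt_0_INR; lia).
  exists ((r - norm n X) / INR n). split; [apply Rdiv_lt_0_compat; lra|].
  intros s Hs. split; [now apply shift_inRn|]. rewrite dist_origin.
  eapply Rle_lt_trans; [apply (norm_le_of_coord_close n (Rabs s) X); [apply Rabs_pos|]|].
  - intros i Hi. destruct (Nat.eq_dec i j) as [->|Hij].
    + rewrite shift_same. replace (X j + s - X j) with s by ring. lra.
    + rewrite shift_other, Rminus_eq_0, Rabs_R0 by exact Hij. apply Rabs_pos.
  - apply (Rmult_lt_compat_l (INR n)) in Hs; [|exact HN].
    replace (INR n * ((r - norm n X) / INR n)) with (r - norm n X) in Hs by (field; lra). lra.
Qed.

Lemma cont_on_zero_at_floor n v X j a : (j < n)%nat -> cont_on n (Bn n 1) v ->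
  (forall x, Bn n 1 x -> x j < a -> v x = 0) -> Bn n 1 X -> X j = a -> v X = 0.
Proof.
  intros Hj Hv Hbelow HX HXj. apply NNPP. intros HvX.
  destruct (cont_on_nonzero_near n _ v X Hv HX HvX) as [d [Hd Hnear]].
  destruct (Bn_shift n 1 X j Hj HX) as [d' [Hd' Hball]].
  set (s := Rmin d d' / 2).
  assert (Hs : 0 < s < Rmin d d') by (unfold s; pose proof (Rmin_glb_lt d d' 0 Hd Hd'); lra).
  pose proof (Rmin_l d d'). pose proof (Rmin_r d d').
  assert (HZ : Bn n 1 (shift X j (- s))) by (apply Hball; rewrite Rabs_Ropp, Rabs_right; lra).
  apply (Hnear (shift X j (- s)) HZ).
  - rewrite dist_shift, Rabs_Ropp, Rabs_right by (exact Hj || lra). lra.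
  - apply Hbelow; [exact HZ|]. rewrite shift_same. lra.
Qed.

Lemma harmonic_sub_superharmonic_no_line_max n O v w (w1 : nat -> pt -> R) (w2 : nat -> R) X :
  harmonic_on n O v -> O X ->
  (forall j z, (j < n)%nat -> has_partial w z j (w1 j z)) ->
  (forall j, (j < n)%nat -> has_partial (w1 j) X j (w2 j)) ->
  rsum n w2 < 0 ->
  (forall j, (j < n)%nat -> exists r, r > 0 /\ forall s, Rabs s < r ->
     O (shift X j s) /\ v (shift X j s) - w (shift X j s) <= v X - w X) ->
  False.
Proof.
  intros [D1 [D2 [[_ [_ [_ [HD1 HD2]]]] Hlap]]] HX Hw1 Hw2 Hw Hline.
  assert (Hle : rsum n (fun j => D2 j j X - w2 j) <= 0).
  { apply (laplacian_nonpos_at_line_max n (fun z => v z - w z) (fun j z => D1 j z - w1 j z)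
      (fun j => D2 j j X - w2 j) X).
    - intros j Hj. destruct (Hline j Hj) as [r [Hr Hjr]]. exists r. split; [exact Hr|].
      intros s Hs. destruct (Hjr s Hs) as [HO Hmax]. split; [exact Hmax|].
      apply has_partial_minus; auto.
    - intros j Hj. apply has_partial_minus; auto. }
  rewrite rsum_minus, (Hlap X HX) in Hle. lra.
Qed.

Section Barrier.

Variables (k : nat) (a h A B D : R) (y : pt).
Hypotheses (h_pos : 0 < h) (D_large : 1 <= D * h ^ 2) (B_large : INR k * D < B)
  (A_large : 1 <= A * h - B * h ^ 2).

(* The barrier [D |x' - y'|^2 + A t - B t^2], [t = x_k - a], written as a sum of
   one-variable profiles so that its partial derivatives are read off coordinatewise. *)
Definition profile j t :=
  if (j <? k)%nat then D * (t - y j) ^ 2 else A * (t - a) - B * (t - a) ^ 2.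
Definition profile_d1 j t :=
  if (j <? k)%nat then 2 * D * (t - y j) else A - 2 * B * (t - a).
Definition profile_d2 j := if (j <? k)%nat then 2 * D else - 2 * B.

Definition barrier (x : pt) := rsum (S k) (fun j => profile j (x j)).

Definition barrier_box := box (S k)
  (fun j => if (j <? k)%nat then y j - h else a) (fun j => if (j <? k)%nat then y j + h else a + h).

Lemma barrier_eq x :
  barrier x = D * rsum k (fun j => (x j - y j) ^ 2) + (A * (x k - a) - B * (x k - a) ^ 2).
Proof.
  unfold barrier, profile. simpl rsum. rewrite Nat.ltb_irrefl, <- rsum_scal.
  f_equal. apply rsum_ext. intros j Hj. now rewrite (proj2 (Nat.ltb_lt j k) Hj).
Qed.

Lemma barrier_box_iff x : barrier_box x <->
  inRn (S k) x /\ (forall j, (j < k)%nat -> Rabs (x j - y j) <= h) /\ a <= x k <= a + h.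
Proof.
  unfold barrier_box, box. split.
  - intros [Hx Hbox]. split; [exact Hx|split].
    + intros j Hj. specialize (Hbox j ltac:(lia)).
      rewrite (proj2 (Nat.ltb_lt j k) Hj) in Hbox. apply Rabs_le. lra.
    + specialize (Hbox k ltac:(lia)). now rewrite Nat.ltb_irrefl in Hbox.
  - intros [Hx [Hlat Hk]]. split; [exact Hx|]. intros j Hj.
    destruct (Nat.ltb_spec j k) as [Hjk|Hjk].
    + specialize (Hlat j Hjk). apply Rabs_le_between in Hlat. lra.
    + now replace j with k by lia.
Qed.

Let D_pos : 0 < D.
Proof. assert (0 < h ^ 2) by (apply pow_lt; exact h_pos). nra. Qed.

Let B_pos : 0 < B.
Proof. pose proof (pos_INR k). pose proof D_pos. nra. Qed.

Lemma vertical_profile_nonneg t : 0 <= t <= h -> 0 <= A * t - B * t ^ 2.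
Proof.
  intros Ht. pose proof B_pos.
  assert (0 < A - B * h) by (assert (1 <= h * (A - B * h)) by lra; nra).
  assert (0 <= A - B * t) by nra.
  replace (A * t - B * t ^ 2) with (t * (A - B * t)) by ring. apply Rmult_le_pos; lra.
Qed.

Lemma barrier_nonneg x : barrier_box x -> 0 <= barrier x.
Proof.
  intros [_ [_ Hk]]%barrier_box_iff. rewrite barrier_eq.
  pose proof (sum_sq_nonneg k (fun j => x j - y j)). pose proof D_pos.
  pose proof (vertical_profile_nonneg (x k - a) ltac:(lra)). nra.
Qed.

Lemma barrier_ge1_top x : x k = a + h -> 1 <= barrier x.
Proof.
  intros Hk. rewrite barrier_eq, Hk. replace (a + h - a) with h by ring.
  pose proof (sum_sq_nonneg k (fun j => x j - y j)). pose proof D_pos. nra.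
Qed.

Lemma barrier_ge1_side x j : barrier_box x -> (j < k)%nat -> Rabs (x j - y j) = h ->
  1 <= barrier x.
Proof.
  intros [_ [_ Hk]]%barrier_box_iff Hj Hxj. rewrite barrier_eq.
  assert (Hsum : h ^ 2 <= rsum k (fun i => (x i - y i) ^ 2)).
  { rewrite <- Hxj, pow2_abs.
    apply (rsum_term_le k (fun i => (x i - y i) ^ 2)); [intros; apply pow2_ge_0|exact Hj]. }
  pose proof (vertical_profile_nonneg (x k - a) ltac:(lra)). pose proof D_pos. nra.
Qed.

Lemma barrier_center_le : barrier y <= A * (y k - a).
Proof.
  rewrite barrier_eq, (rsum_ext k _ (fun _ => 0)) by (intros; ring).
  rewrite rsum_const. pose proof B_pos. pose proof (pow2_ge_0 (y k - a)). nra.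
Qed.

Lemma profile_deriv j t : derivable_pt_lim (profile j) t (profile_d1 j t).
Proof.
  unfold profile, profile_d1. apply is_derive_Reals.
  destruct (j <? k)%nat; auto_derive; trivial; ring.
Qed.

Lemma profile_d1_deriv j t : derivable_pt_lim (profile_d1 j) t (profile_d2 j).
Proof.
  unfold profile_d1, profile_d2. apply is_derive_Reals.
  destruct (j <? k)%nat; auto_derive; trivial; ring.
Qed.

Lemma barrier_has_partial j x : (j < S k)%nat -> has_partial barrier x j (profile_d1 j (x j)).
Proof. intros Hj. apply has_partial_separable; [exact Hj|apply profile_deriv]. Qed.

Lemma profile_d1_has_partial j x : has_partial (fun z => profile_d1 j (z j)) x j (profile_d2 j).
Proof. apply has_partial_coord_fun, profile_d1_deriv. Qed.

Lemma barrier_laplacian_neg : rsum (S k) profile_d2 < 0.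
Proof.
  unfold profile_d2. simpl rsum. rewrite Nat.ltb_irrefl.
  rewrite (rsum_ext k _ (fun _ => 2 * D)), rsum_const; [lra|].
  intros j Hj. now rewrite (proj2 (Nat.ltb_lt j k) Hj).
Qed.

Lemma barrier_cont P : cont_on (S k) P barrier.
Proof.
  apply cont_on_separable. intros j _ t.
  apply derivable_continuous_pt. exists (profile_d1 j t). apply profile_deriv.
Qed.

Lemma barrier_box_shift x j : barrier_box x ->
  (forall i, (i < k)%nat -> Rabs (x i - y i) < h) -> a < x k < a + h -> (j < S k)%nat ->
  exists r, r > 0 /\ forall s, Rabs s < r -> barrier_box (shift x j s).
Proof.
  intros [Hx _]%barrier_box_iff Hlat Hk Hj.
  destruct (Nat.ltb_spec j k) as [Hjk|Hjk].
  - exists (h - Rabs (x j - y j)). split; [specialize (Hlat j Hjk); lra|].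
    intros s Hs. apply barrier_box_iff. split; [now apply shift_inRn|split].
    + intros i Hi. destruct (Nat.eq_dec i j) as [->|Hij].
      * rewrite shift_same. replace (x j + s - y j) with ((x j - y j) + s) by ring.
        eapply Rle_trans; [apply Rabs_triang|lra].
      * rewrite shift_other by exact Hij. now apply Rlt_le, Hlat.
    + rewrite shift_other by lia. lra.
  - replace j with k by lia.
    exists (Rmin (x k - a) (a + h - x k)). split; [apply Rmin_glb_lt; lra|].
    intros s Hs. pose proof (Rmin_l (x k - a) (a + h - x k)).
    pose proof (Rmin_r (x k - a) (a + h - x k)). apply Rabs_def2 in Hs.
    apply barrier_box_iff. split; [apply shift_inRn; [lia|exact Hx]|split].
    + intros i Hi. rewrite shift_other by lia. now apply Rlt_le, Hlat.
    + rewrite shift_same. lra.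
Qed.

Lemma barrier_box_sub_ball x : INR (S k) * h < / 4 -> Bn (S k) (3 / 4) y ->
  a <= y k <= a + h -> barrier_box x -> Bn (S k) 1 x.
Proof.
  intros Hh [_ Hy] Hyk [Hx [Hlat Hk]]%barrier_box_iff. split; [exact Hx|].
  rewrite dist_origin in *.
  eapply Rle_lt_trans; [apply (norm_le_of_coord_close (S k) h y); [lra|]|lra].
  intros j Hj. destruct (Nat.ltb_spec j k) as [Hjk|Hjk]; [now apply Hlat|].
  replace j with k by lia. apply Rabs_le. lra.
Qed.

Section Comparison.

Variables (v : pt -> R) (O : pt -> Prop).
Hypotheses (h_small : INR (S k) * h < / 4) (y_ball : Bn (S k) (3 / 4) y)
  (y_box : a <= y k <= a + h)
  (v_cont : cont_on (S k) (Bn (S k) 1) v) (v_harm : harmonic_on (S k) O v)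
  (v_supp : forall x, Bn (S k) 1 x -> v x <> 0 -> O x)
  (v_le1 : forall x, Bn (S k) 1 x -> v x <= 1)
  (v_floor : forall x, Bn (S k) 1 x -> x k < a -> v x = 0).

Let box_sub_ball x : barrier_box x -> Bn (S k) 1 x.
Proof. now apply barrier_box_sub_ball. Qed.

Lemma barrier_box_max_nonpos X : barrier_box X ->
  (forall x, barrier_box x -> v x - barrier x <= v X - barrier X) -> v X - barrier X <= 0.
Proof.
  intros HX Hmax. apply Rnot_lt_le. intros Hpos.
  pose proof (barrier_nonneg X HX). pose proof (v_le1 X (box_sub_ball X HX)).
  pose proof HX as [_ [Hlat HXk]]%barrier_box_iff.
  destruct (Req_dec (X k) (a + h)) as [Htop|Htop].
  { pose proof (barrier_ge1_top X Htop). lra. }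
  destruct (classic (exists j, (j < k)%nat /\ Rabs (X j - y j) = h)) as [[j [Hj Hside]]|Hside].
  { pose proof (barrier_ge1_side X j HX Hj Hside). lra. }
  assert (HvX : v X <> 0) by lra.
  destruct (Req_dec (X k) a) as [Hfloor|Hfloor].
  { apply HvX, (cont_on_zero_at_floor (S k) v X k a); auto. }
  destruct (cont_on_nonzero_near (S k) _ v X v_cont (box_sub_ball X HX) HvX) as [d [Hd Hnear]].
  apply (harmonic_sub_superharmonic_no_line_max (S k) O v barrier
    (fun j z => profile_d1 j (z j)) profile_d2 X v_harm).
  - exact (v_supp X (box_sub_ball X HX) HvX).
  - intros j z Hj. now apply barrier_has_partial.
  - intros j _. apply profile_d1_has_partial.
  - exact barrier_laplacian_neg.
  - intros j Hj.
    destruct (barrier_box_shift X j HX) as [r [Hr Hshift]]; [|lra|exact Hj|].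
    { intros i Hi. destruct (Rle_lt_or_eq_dec _ _ (Hlat i Hi)) as [Hlt|Heq]; [exact Hlt|].
      exfalso. apply Hside. now exists i. }
    exists (Rmin r d). split; [now apply Rmin_glb_lt|].
    intros s Hs. pose proof (Rmin_l r d). pose proof (Rmin_r r d).
    assert (HZ : barrier_box (shift X j s)) by (apply Hshift; lra).
    split; [|exact (Hmax _ HZ)].
    apply v_supp, Hnear; [exact (box_sub_ball _ HZ)|exact (box_sub_ball _ HZ)|].
    rewrite dist_shift by exact Hj. lra.
Qed.

Lemma barrier_comparison : v y <= barrier y.
Proof.
  destruct (BoxCompactness.box_max (S k) (fun j => if (j <? k)%nat then y j - h else a)
    (fun j => if (j <? k)%nat then y j + h else a + h) (fun x => v x - barrier x))
    as [X [HX Hmax]].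
  - intros j _. destruct (j <? k)%nat; lra.
  - apply cont_on_minus; [exact (cont_on_subset _ _ _ _ box_sub_ball v_cont)|apply barrier_cont].
  - assert (Hyb : barrier_box y).
    { apply barrier_box_iff. split; [apply y_ball|split; [|exact y_box]].
      intros j _. rewrite Rminus_eq_0, Rabs_R0. lra. }
    pose proof (Hmax y Hyb). pose proof (barrier_box_max_nonpos X HX Hmax). lra.
Qed.

End Comparison.

Lemma barrier_abs_bound u O eps : 0 < eps ->
  INR (S k) * h < / 4 -> Bn (S k) (3 / 4) y -> a <= y k <= a + h ->
  cont_on (S k) (Bn (S k) 1) u -> harmonic_on (S k) O u ->
  (forall x, Bn (S k) 1 x -> u x <> 0 -> O x) ->
  (forall x, Bn (S k) 1 x -> Rabs (u x) <= eps) ->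
  (forall x, Bn (S k) 1 x -> x k < a -> u x = 0) ->
  Rabs (u y) <= eps * (A * (y k - a)).
Proof.
  intros Heps Hh Hy Hyk Hu Hharm HO Hueps Hfloor.
  assert (Hsign : forall sg, Rabs sg = 1 -> sg * u y <= eps * (A * (y k - a))).
  { intros sg Hsg. set (c := sg / eps).
    replace (sg * u y) with (eps * (c * u y)) by (unfold c; field; lra).
    apply Rmult_le_compat_l; [lra|].
    eapply Rle_trans; [|apply barrier_center_le].
    apply (barrier_comparison (fun x => c * u x) O); auto.
    - now apply cont_on_scal.
    - now apply harmonic_on_scal.
    - intros x Hx Hcu. apply HO; [exact Hx|]. intros Hux. apply Hcu. rewrite Hux. ring.
    - intros x Hx. eapply Rle_trans; [apply Rle_abs|].
      unfold c. rewrite Rabs_mult, Rabs_div, Hsg, Rabs_right by lra.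
      apply (Rmult_le_reg_l eps); [exact Heps|].
      replace (eps * (1 / eps * Rabs (u x))) with (Rabs (u x)) by (field; lra).
      rewrite Rmult_1_r. exact (Hueps x Hx).
    - intros x Hx Hxk. rewrite (Hfloor x Hx Hxk). ring. }
  pose proof (Hsign 1 Rabs_R1). pose proof (Hsign (-1) ltac:(rewrite Rabs_left by lra; ring)).
  apply Rabs_le. lra.
Qed.

End Barrier.

Lemma barrier_constants k : exists h A B D, 0 < h /\ INR (S k) * h < / 4 /\
  1 <= D * h ^ 2 /\ INR k * D < B /\ 1 <= A * h - B * h ^ 2.
Proof.
  assert (HN : 1 <= INR (S k)) by (apply (le_INR 1); lia).
  set (h := / (8 * INR (S k))).
  assert (Hh : 0 < h) by (apply Rinv_0_lt_compat; lra).
  exists h, (INR (S k) / h ^ 2 * h + / h), (INR (S k) / h ^ 2), (/ h ^ 2).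
  repeat split.
  - exact Hh.
  - unfold h. replace (INR (S k) * / (8 * INR (S k))) with (/ 8) by (field; lra). lra.
  - right. field. lra.
  - rewrite S_INR. assert (0 < / h ^ 2) by (apply Rinv_0_lt_compat, pow_lt, Hh).
    unfold Rdiv. nra.
  - right. field. lra.
Qed.

Lemma harmonic_flat_bound k : exists C, C > 0 /\
  forall (u : pt -> R) (O : pt -> Prop) eps, eps > 0 ->
    cont_on (S k) (Bn (S k) 1) u -> harmonic_on (S k) O u ->
    (forall x, Bn (S k) 1 x -> u x <> 0 -> O x) ->
    (forall x, Bn (S k) 1 x -> Rabs (u x) <= eps) ->
    (forall x, Bn (S k) 1 x -> x k < - eps -> u x = 0) ->
    forall y, Bn (S k) (3 / 4) y -> Rabs (u y) <= C * eps * Rmax (y k + eps) 0.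
Proof.
  destruct (barrier_constants k) as [h [A [B [D [Hh [Hnh [HD [HB HA]]]]]]]].
  assert (HBpos : 0 < B) by (pose proof (pos_INR k); assert (0 < h ^ 2) by (apply pow_lt; lra); nra).
  assert (HAh : 1 <= A * h) by (pose proof (pow2_ge_0 h); nra).
  exists A. split; [nra|].
  intros u O eps Heps Hu Hharm HO Hueps Hfloor y Hy.
  assert (Hy1 : Bn (S k) 1 y) by (destruct Hy; split; [assumption|lra]).
  pose proof (Rmax_r (y k + eps) 0).
  destruct (Rlt_or_le (y k + eps) 0) as [Hlow|Hhigh].
  { rewrite (Hfloor y Hy1 ltac:(lra)), Rabs_R0. apply Rmult_le_pos; nra. }
  rewrite Rmax_left by exact Hhigh.
  destruct (Rlt_or_le (y k + eps) h) as [Hnear|Hfar].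
  - replace (A * eps * (y k + eps)) with (eps * (A * (y k - - eps))) by ring.
    apply (barrier_abs_bound k (- eps) h A B D y Hh HD HB HA u O); auto; lra.
  - eapply Rle_trans; [exact (Hueps y Hy1)|].
    assert (A * h <= A * (y k + eps)) by (apply Rmult_le_compat_l; nra). nra.
Qed.

Lemma flat_other_component_le m (W : pt) a eps i : (1 <= i < m)%nat ->
  norm m (fun j => W j - e1 j * a) <= eps -> Rabs (W i) <= eps.
Proof.
  intros Hi Hflat. eapply Rle_trans; [|exact Hflat].
  replace (W i) with (W i - e1 i * a) by (rewrite e1_neq0 by lia; ring).
  apply (Rabs_le_norm m (fun j => W j - e1 j * a)). lia.
Qed.

Lemma flat_norm_bounds m (W : pt) t eps : (1 <= m)%nat ->
  norm m (fun j => W j - e1 j * Rmax t 0) <= eps -> (t < - eps -> norm m W = 0) ->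
  t - eps <= W 0%nat /\ W 0%nat <= norm m W /\ norm m W <= Rmax (t + 2 * eps) 0.
Proof.
  intros Hm Hflat Hzero.
  pose proof (Rmax_l t 0). pose proof (Rmax_r t 0). pose proof (Rmax_r (t + 2 * eps) 0).
  assert (HW0 := Rabs_le_norm m (fun j => W j - e1 j * Rmax t 0) 0%nat ltac:(lia)).
  cbv beta in HW0. rewrite e1_0, Rmult_1_l in HW0. apply Rabs_le_between in HW0.
  split; [lra|split].
  - eapply Rle_trans; [apply Rle_abs|apply Rabs_le_norm; lia].
  - destruct (Rlt_or_le t (- eps)) as [Hlow|Hhigh]; [rewrite Hzero by exact Hlow; lra|].
    assert (Ht : Rmax t 0 <= t + eps)
      by (destruct (Rle_or_lt t 0); [rewrite Rmax_right|rewrite Rmax_left]; lra).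
    eapply Rle_trans; [apply (norm_le_sub_e1 m W (Rmax t 0) Hm); lra|].
    eapply Rle_trans; [|apply Rmax_l]. lra.
Qed.

Theorem lemma2p2 : forall n m : nat, (1 <= n)%nat -> (1 <= m)%nat ->
  exists C : R, C > 0 /\
  forall (U : pt -> pt) (eps : R),
    viscosity_solution n m U -> eps > 0 ->
    (forall x, Bn n 1 x ->
       norm m (fun j => U x j - e1 j * Rmax (x (n - 1)%nat) 0) <= eps) ->
    (forall x, Bn n 1 x -> x (n - 1)%nat < - eps -> Uabs m U x = 0) ->
    (forall i x, (1 <= i < m)%nat -> Bn n (3/4) x ->
       Rabs (U x i) <= C * eps * Rmax (x (n - 1)%nat + eps) 0) /\
    (forall x, Bn n 1 x ->
       x (n - 1)%nat - eps <= U x 0%nat /\ U x 0%nat <= Uabs m U x /\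
       Uabs m U x <= Rmax (x (n - 1)%nat + 2 * eps) 0).
Proof.
  intros n m Hn Hm. destruct n as [|k]; [lia|]. replace (S k - 1)%nat with k by lia.
  destruct (harmonic_flat_bound k) as [C [HC Hbound]].
  exists C. split; [exact HC|].
  intros U eps [Hcont [Hharm _]] Heps Hflat Hzero. split.
  - intros i x Hi Hx.
    apply (Hbound (fun z => U z i) (pos_set (S k) m U) eps Heps);
      [apply Hcont; lia|apply Hharm; lia| | | |exact Hx].
    + intros z Hz Hzi. split; [exact Hz|].
      eapply Rlt_le_trans; [apply Rabs_pos_lt, Hzi|apply Rabs_le_norm; lia].
    + intros z Hz. apply (flat_other_component_le m (U z) (Rmax (z k) 0)); auto.
    + intros z Hz Hzk. apply Rabs_eq_0, Rle_antisym; [|apply Rabs_pos].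
      rewrite <- (Hzero z Hz Hzk). apply Rabs_le_norm. lia.
  - intros x Hx. exact (flat_norm_bounds m (U x) (x k) eps Hm (Hflat x Hx) (Hzero x Hx)).
Qed.
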